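(* If $\tilde y\in\mathbb{R}^{\mathcal{A}}$ satisfies $\phi_\lambda(\tilde y)<0$ for some $\lambda\in\Lambda_X(\mathcal{A})$, then $\exp\tilde y\notin C_X(\mathcal{A})^*$ (with $\exp$ applied entrywise).
   Context: $X\subset\mathbb{R}^n$ is a nonempty closed convex set and $\mathcal{A}\subset\mathbb{R}^n$ is a nonempty finite set such that the functions $x\mapsto\exp(\alpha^Tx)$, $\alpha\in\mathcal{A}$, are linearly independent on $X$. $\mathbb{R}^{\mathcal{A}}$ denotes real vectors indexed by $\mathcal{A}$. $\mathcal{A}\nu=\sum_\alpha\alpha\nu_\alpha$. $\sigma_X(y)=\sup\{y^Tx:x\in X\}$. $N_\beta=\{\nu\in\mathbb{R}^{\mathcal{A}}:\nu_\alpha\ge0\ \forall\alpha\neq\beta,\ \sum_\alpha\nu_\alpha=0\}$. A vector $\nu^\star\in N_\beta$ is an $X$-circuit of $\mathcal{A}$ if (1) $\nu^\star\neq0$, (2) $\sigma_X(-\mathcal{A}\nu^\star)<\infty$, and (3) $\nu^\star$ cannot be written as a convex combination of two non-proportional vectors $\nu^{(1)},\nu^{(2)}\in N_\beta$ such that the map $\nu\mapsto\sigma_X(-\mathcal{A}\nu)$ is affine on the segment $[\nu^{(1)},\nu^{(2)}]$. $\Lambda_X(\mathcal{A})$ is the set of all $X$-circuits $\lambda$ (over all $\beta\in\mathcal{A}$) normalized so that the unique negative entry equals $-1$. The functional form of $\lambda$ is the affine function $\phi_\lambda(y)=\sum_\alpha y_\alpha\lambda_\alpha+\sigma_X(-\mathcal{A}\lambda)$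 on $\mathbb{R}^{\mathcal{A}}$. Signomials $f=\sum_\alpha c_\alpha\mathrm{e}^\alpha$, $\mathrm{e}^\alpha(x)=\exp(\alpha^Tx)$, are identified with $c\in\mathbb{R}^{\mathcal{A}}$; $C_X(\mathcal{A},\beta)$ is the set of $c$ with $f$ nonnegative on $X$ and $c_\alpha\ge0$ for $\alpha\ne\beta$; $C_X(\mathcal{A})=\sum_{\beta\in\mathcal{A}}C_X(\mathcal{A},\beta)$, and $C_X(\mathcal{A})^*=\{v\in\mathbb{R}^{\mathcal{A}}:v^Tc\ge0\ \forall c\in C_X(\mathcal{A})\}$. *)

(* R : realType, R^n = 'rV[R]_n. *)
From mathcomp Require Import all_boot all_order all_algebra.
From mathcomp Require Import all_classical all_reals all_analysis.
Set Implicit Arguments. Unset Strict Implicit. Unset Printing Implicit Defensive.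
Import Order.TTheory GRing.Theory Num.Theory.
Local Open Scope classical_set_scope.
Local Open Scope ring_scope.

Section SigDefs.
Variables (R : realType) (n : nat).

Definition dotv (y x : 'rV[R]_n) : R := \sum_(j < n) y 0 j * x 0 j.

Definition convexR (X : set 'rV[R]_n) : Prop :=
  forall x y t, X x -> X y -> 0 <= t <= 1 -> X (t *: x + (1 - t) *: y).

Definition sigmaX (X : set 'rV[R]_n) (y : 'rV[R]_n) : \bar R :=
  ereal_sup [set (dotv y x)%:E | x in X].

(* The finite set A is given as the (injective) image of a : I -> R^n;
   vectors in R^A are functions I -> R. *)
Variable I : finType.

Definition Amul (a : I -> 'rV[R]_n) (nu : I -> R) : 'rV[R]_n :=
  \sum_(i : I) nu i *: a i.

Definition exp_lin_indep (X : set 'rV[R]_n) (a : I -> 'rV[R]_n) : Prop :=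
  forall c : I -> R,
    (forall x, X x -> \sum_(i : I) c i * expR (dotv (a i) x) = 0) ->
    forall i, c i = 0.

Definition Nbeta (beta : I) : set (I -> R) :=
  [set nu | (forall i, i != beta -> 0 <= nu i) /\ \sum_(i : I) nu i = 0].

Definition sigA (X : set 'rV[R]_n) (a : I -> 'rV[R]_n) (nu : I -> R) : \bar R :=
  sigmaX X (- Amul a nu).

Definition affine_on_segment (X : set 'rV[R]_n) (a : I -> 'rV[R]_n)
    (nu1 nu2 : I -> R) : Prop :=
  forall t : R, 0 <= t <= 1 ->
    sigA X a (fun i => (1 - t) * nu1 i + t * nu2 i) =
    ((1 - t)%:E * sigA X a nu1 + t%:E * sigA X a nu2)%E.

Definition proportional (nu1 nu2 : I -> R) : Prop :=
  exists k : R, (nu1 = fun i => k * nu2 i) \/ (nu2 = fun i => k * nu1 i).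

Definition is_X_circuit (X : set 'rV[R]_n) (a : I -> 'rV[R]_n) (beta : I)
    (nu : I -> R) : Prop :=
  [/\ Nbeta beta nu,
      nu <> (fun=> 0),
      (sigA X a nu < +oo)%E &
      ~ (exists nu1 nu2 (th : R),
           [/\ Nbeta beta nu1 /\ Nbeta beta nu2, ~ proportional nu1 nu2,
               0 < th < 1,
               nu = (fun i => th * nu1 i + (1 - th) * nu2 i) &
               affine_on_segment X a nu1 nu2])].

(* Lambda_X(A): circuits normalized so that the unique negative entry
   (the beta entry) equals -1 *)
Definition LambdaX (X : set 'rV[R]_n) (a : I -> 'rV[R]_n) : set (I -> R) :=
  [set lam | exists beta, is_X_circuit X a beta lam /\ lam beta = -1].

Definition phi_form (X : set 'rV[R]_n) (a : I -> 'rV[R]_n) (lam y : I -> R)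
  : \bar R :=
  ((\sum_(i : I) y i * lam i)%:E + sigA X a lam)%E.

Definition CXbeta (X : set 'rV[R]_n) (a : I -> 'rV[R]_n) (beta : I)
  : set (I -> R) :=
  [set c | (forall x, X x -> 0 <= \sum_(i : I) c i * expR (dotv (a i) x)) /\
           (forall i, i != beta -> 0 <= c i)].

Definition CX (X : set 'rV[R]_n) (a : I -> 'rV[R]_n) : set (I -> R) :=
  [set c | exists cb : I -> I -> R,
      (forall beta, CXbeta X a beta (cb beta)) /\
      c = (fun i => \sum_(beta : I) cb beta i)].

Definition CXdual (X : set 'rV[R]_n) (a : I -> 'rV[R]_n) : set (I -> R) :=
  [set v | forall c, CX X a c -> 0 <= \sum_(i : I) v i * c i].

End SigDefs.

From mathcomp Require Import all_boot all_order all_algebra.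
From mathcomp Require Import all_classical all_reals all_analysis.
From mathcomp Require Import ring lra.
Set Implicit Arguments. Unset Strict Implicit. Unset Printing Implicit Defensive.
Import Order.TTheory GRing.Theory Num.Theory numFieldNormedType.Exports.
Local Open Scope classical_set_scope.
Local Open Scope ring_scope.

(* Let lam be an X-circuit with negative entry lam_beta = -1 and
   write t := phi_lam(y) = sum_i y_i lam_i + s, where s = sigma_X(-A lam) is
   finite.  The signomial with coefficients
       c_i = lam_i * exp(-y_i - [i = beta] t)
   is nonnegative on X: writing u_i = alpha_i^T x - y_i, the weights lam_i
   (i <> beta) sum to 1, so by convexity of exp (weighted AM-GM)
       sum_{i<>beta} lam_i e^{u_i} >= exp(sum_{i<>beta} lam_i u_i)
                                   =  exp(u_beta + (A lam)^T x - sum_i y_i lam_i)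
                                   >= exp(u_beta - t),
   the last step because -(A lam)^T x <= s on X.  Its coefficients are
   nonnegative off beta, so c lies in C_X(A, beta), a subset of C_X(A).  But
   its pairing with exp y is sum_{i<>beta} lam_i - e^{-t} = 1 - e^{-t}, which is
   negative when t < 0; hence exp y is not in the dual cone. *)

Section Linear.
Variables (R : realType) (n : nat) (I : finType).

Lemma dotvN (v x : 'rV[R]_n) : dotv (- v) x = - dotv v x.
Proof. by rewrite /dotv -sumrN; apply: eq_bigr => j _; rewrite mxE mulNr. Qed.

Lemma dotv_Amul (a : I -> 'rV[R]_n) (nu : I -> R) (x : 'rV[R]_n) :
  dotv (Amul a nu) x = \sum_i nu i * dotv (a i) x.
Proof.
rewrite /dotv /Amul.
under eq_bigr => j _ do rewrite summxE mulr_suml.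
rewrite exchange_big; apply: eq_bigr => i _; rewrite mulr_sumr.
by apply: eq_bigr => j _; rewrite mxE mulrA.
Qed.

End Linear.

(* Finite Jensen inequality for exp (weighted AM-GM), proved with the tangent
   line of exp at the barycenter m: e^u >= e^m (1 + u - m). *)
Lemma expR_convex_sum (R : realType) (I : finType) (P : pred I) (w u : I -> R) :
  (forall i, P i -> 0 <= w i) -> \sum_(i | P i) w i = 1 ->
  expR (\sum_(i | P i) w i * u i) <= \sum_(i | P i) w i * expR (u i).
Proof.
move=> w_ge0 w_sum1; set m := \sum_(i | P i) w i * u i.
have tangent i : P i -> w i * (expR m * (1 + u i - m)) <= w i * expR (u i).
  move=> Pi; apply: ler_wpM2l; first exact: w_ge0.
  have -> : expR (u i) = expR m * expR (u i - m) by rewrite -expRD addrC subrK.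
  by rewrite ler_wpM2l ?expR_ge0 // -addrA expR_ge1Dx.
apply: le_trans (ler_sum _ tangent).
have expand : \sum_(i | P i) w i * (expR m * (1 + u i - m)) =
    expR m * \sum_(i | P i) w i + expR m * m - expR m * m * \sum_(i | P i) w i.
  transitivity (\sum_(i | P i)
      (expR m * w i + expR m * (w i * u i) - expR m * m * w i)).
    by apply: eq_bigr => i _; ring.
  by rewrite sumrB big_split /= -!mulr_sumr.
by rewrite expand w_sum1 !mulr1 addrK.
Qed.

Section Witness.
Variables (R : realType) (n : nat) (I : finType).
Variables (X : set 'rV[R]_n) (a : I -> 'rV[R]_n).

Lemma CXbeta_sub_CX (beta : I) (c : I -> R) : CXbeta X a beta c -> CX X a c.
Proof.
move=> hc; exists (fun b => if b == beta then c else fun=> 0); split.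
- move=> b; case: eqP => [-> //|_].
  by split=> [x _|i _] //; rewrite big1 // => i _; rewrite mul0r.
- apply: funext => i; rewrite (bigD1 beta) //= eqxx big1 ?addr0 //.
  by move=> b /negbTE ->.
Qed.

Variables (lam y : I -> R) (beta : I) (s : R).
Hypotheses (lam_ge0 : forall i, i != beta -> 0 <= lam i)
           (lam_sum0 : \sum_i lam i = 0) (lam_beta : lam beta = -1).
Hypothesis s_ub : forall x, X x -> dotv (- Amul a lam) x <= s.

Let t := \sum_i y i * lam i + s.

Definition witness (i : I) : R := lam i * expR (- y i - (i == beta)%:R * t).

Lemma lam_offbeta_sum1 : \sum_(i | i != beta) lam i = 1.
Proof.
move: lam_sum0; rewrite (bigD1 beta) //= lam_beta => /eqP.
by rewrite addrC subr_eq0 => /eqP.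
Qed.

Lemma witness_CXbeta : CXbeta X a beta witness.
Proof.
split=> [x Xx|i ib]; last by rewrite mulr_ge0 ?lam_ge0 ?expR_ge0.
pose u i := dotv (a i) x - y i.
have eval i : witness i * expR (dotv (a i) x) =
              lam i * expR (u i - (i == beta)%:R * t).
  by rewrite -mulrA -expRD; congr (_ * expR _); rewrite /u; ring.
under eq_bigr => i _ do rewrite eval.
rewrite (bigD1 beta) //= eqxx lam_beta mulN1r mul1r addrC subr_ge0.
have offbeta : \sum_(i | i != beta) lam i * expR (u i - (i == beta)%:R * t) =
               \sum_(i | i != beta) lam i * expR (u i).
  by apply: eq_bigr => i /negbTE ->; rewrite mul0r subr0.
rewrite offbeta; apply: le_trans (expR_convex_sum u lam_ge0 lam_offbeta_sum1).
rewrite ler_expR.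
have combo : \sum_(i | i != beta) lam i * u i =
             u beta + dotv (Amul a lam) x - \sum_i y i * lam i.
  have full : \sum_i lam i * u i = dotv (Amul a lam) x - \sum_i y i * lam i.
    by rewrite dotv_Amul -sumrB; apply: eq_bigr => i _; rewrite /u; ring.
  by move: full; rewrite (bigD1 beta) //= lam_beta mulN1r; lra.
rewrite combo /t; have := s_ub Xx; rewrite dotvN; lra.
Qed.

Lemma witness_pairing : \sum_i expR (y i) * witness i = 1 - expR (- t).
Proof.
have term i : expR (y i) * witness i = lam i * expR (- ((i == beta)%:R * t)).
  by rewrite mulrCA -expRD; congr (_ * expR _); ring.
under eq_bigr => i _ do rewrite term.
rewrite (bigD1 beta) //= eqxx lam_beta mul1r mulN1r addrC.
congr (_ - _); rewrite -lam_offbeta_sum1.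
by apply: eq_bigr => i /negbTE ->; rewrite mul0r oppr0 expR0 mulr1.
Qed.

End Witness.

Theorem lemma5p13 (R : realType) (n : nat) (I : finType)
    (X : set 'rV[R]_n) (a : I -> 'rV[R]_n)
    (hX0 : X !=set0) (hXcl : closed X) (hXcv : convexR X)
    (hI : (0 < #|I|)%N) (ha : injective a)
    (hind : exp_lin_indep X a)
    (ytil : I -> R)
    (hphi : exists2 lam, LambdaX X a lam & (phi_form X a lam ytil < 0)%E) :
  ~ CXdual X a (fun i => expR (ytil i)).
Proof.
case: hphi => lam [beta [[[lam_ge0 lam_sum0] _ sig_fin _] lam_beta]] phi_neg.
have sig_ub x : X x -> ((dotv (- Amul a lam) x)%:E <= sigA X a lam)%E.
  by move=> Xx; apply: ereal_sup_ubound; exists x.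
have [s sE] : exists s, sigA X a lam = s%:E.
  case: hX0 => x0 /sig_ub; move: sig_fin.
  by case: (sigA X a lam) => [r| |] // _ _; exists r.
have s_ub x : X x -> dotv (- Amul a lam) x <= s.
  by move=> /sig_ub; rewrite sE lee_fin.
have t_neg : \sum_i ytil i * lam i + s < 0.
  by move: phi_neg; rewrite /phi_form sE -EFinD lte_fin.
have c_in := witness_CXbeta ytil lam_ge0 lam_sum0 lam_beta s_ub.
move=> /(_ _ (CXbeta_sub_CX c_in)).
rewrite (witness_pairing ytil s lam_sum0 lam_beta) subr_ge0 expR_le1.
by rewrite lerNl oppr0 leNgt t_neg.
Qed.
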